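(* Let $\omega=f\,dz^k$ be a nonzero $\chi$-automorphic form for $\widetilde\Gamma$ and let $n_a,n_b$ be the orders of vanishing of $f$ at $a$ and $b$. Then $$\chi(\alpha)=e^{2\pi i\frac{k+n_a}{p}},\qquad \chi(\beta)=e^{2\pi i\frac{k+n_b}{q}},$$ and consequently $\chi(x)=e^{2\pi i\frac{k}{pq}}\,e^{2\pi i\frac{qq_1n_a+pp_1n_b}{pq}}$.
   Context: Fix coprime integers $2\le p<q$ and integers $p_1,q_1$ with $pp_1+qq_1=1$. $\widetilde{SL_2}(\mathbb R)$ is the universal covering group of $PSL_2(\mathbb R)$ (covering map $\tilde P$), acting on the upper half plane $\mathbb H^2$ via $\tilde P$. $\widetilde{\mathbb C^\times}=\{e^u:u\in\mathbb C\}$ is the universal cover of $\mathbb C^\times$, $(e^u)^k=e^{ku}$ for $k\in\mathbb Q$, bar = projection to $\mathbb C^\times$. For $\gamma\in\widetilde{SL_2}(\mathbb R)$, $\gamma'\colon\mathbb H^2\to\widetilde{\mathbb C^\times}$ is the lift of $\frac d{dz}\tilde P(\gamma)(z)$ continuous in $\gamma$ with $\mathrm{id}'=1$, and $\gamma(z,w)=(\gamma z,\gamma'(z)w)$. The center is generated by $c$, with $\tilde P(c)=1$ and $c'\equiv e^{2\pi i}$. A degree-$k$ form is $f\,dz^k:(z,w)\mapsto f(z)\overline{w^k}$ with $f$ holomorphic. Let $\alpha_0,\beta_0$ be the classes of $\begin{pmatrix}2\cos(\pi/p)&1\\-1&0\end{pmatrix}$, $\begin{pmatrix}0&1\\-1&2\cos(\pi/q)\end{pmatrix}$,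 with fixed points $a=-\cos(\pi/p)+i\sin(\pi/p)$, $b=\cos(\pi/q)+i\sin(\pi/q)$; $\Gamma_{p,q}=\langle\alpha_0,\beta_0\rangle$; $\widetilde\Gamma=\tilde P^{-1}(\Gamma_{p,q})$; $\alpha,\beta$ the unique lifts of $\alpha_0,\beta_0$ with $\alpha^p=\beta^q=c$; $x=\alpha^{q_1}\beta^{p_1}$. A form $\omega$ is $\chi$-automorphic for a character $\chi\colon\widetilde\Gamma\to U(1)$ if $\omega\circ\gamma=\chi(\gamma)\omega$ for all $\gamma\in\widetilde\Gamma$ and $f$ is bounded on $\{\operatorname{Im}z\ge1\}$. *)

From Stdlib Require Import Reals ZArith QArith Qreals.
Open Scope R_scope.

Definition Cplx : Type := (R * R)%type.
Definition RtoC (x : R) : Cplx := (x, 0).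
Definition C0 : Cplx := (0, 0).
Definition Cadd (z w : Cplx) : Cplx := (fst z + fst w, snd z + snd w).
Definition Copp (z : Cplx) : Cplx := (- fst z, - snd z).
Definition Csub (z w : Cplx) : Cplx := Cadd z (Copp w).
Definition Cmul (z w : Cplx) : Cplx :=
  (fst z * fst w - snd z * snd w, fst z * snd w + snd z * fst w).
Definition Cnorm (z : Cplx) : R := sqrt (fst z ^ 2 + snd z ^ 2).
Definition Cinv (z : Cplx) : Cplx :=
  let r := fst z ^ 2 + snd z ^ 2 in (fst z / r, - snd z / r).
Definition Cdiv (z w : Cplx) : Cplx := Cmul z (Cinv w).
(* exp : Cplx -> Cplx^x ; also the projection  ~Cplx^x = {e^u} -> Cplx^x,  e^u |-> exp u *)
Definition Cexp (z : Cplx) : Cplx := (exp (fst z) * cos (snd z), exp (fst z) * sin (snd z)).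
Fixpoint Cpow (z : Cplx) (n : nat) : Cplx :=
  match n with O => (1, 0) | S m => Cmul z (Cpow z m) end.
Definition e2pii (r : R) : Cplx := Cexp (0, 2 * PI * r).

Definition UHP (z : Cplx) : Prop := 0 < snd z.

Definition C_differentiable_at (f : Cplx -> Cplx) (z0 : Cplx) : Prop :=
  exists l : Cplx, forall eps, 0 < eps -> exists delta, 0 < delta /\
    forall z, 0 < Cnorm (Csub z z0) < delta ->
      Cnorm (Csub (Cdiv (Csub (f z) (f z0)) (Csub z z0)) l) < eps.

Definition holomorphic_on_H (f : Cplx -> Cplx) : Prop :=
  forall z, UHP z -> C_differentiable_at f z.

Definition continuous_on_H (f : Cplx -> Cplx) : Prop :=
  forall z0, UHP z0 -> forall eps, 0 < eps -> exists delta, 0 < delta /\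
    forall z, UHP z -> Cnorm (Csub z z0) < delta -> Cnorm (Csub (f z) (f z0)) < eps.

Definition vanishing_order (f : Cplx -> Cplx) (a : Cplx) (n : nat) : Prop :=
  exists g : Cplx -> Cplx, holomorphic_on_H g /\ g a <> C0 /\
    forall z, UHP z -> f z = Cmul (Cpow (Csub z a) n) (g z).

Record mat := Mat { ma : R; mb : R; mc : R; md : R }.
Definition mdet (m : mat) : R := ma m * md m - mb m * mc m.
Definition mid : mat := Mat 1 0 0 1.
Definition mneg (m : mat) : mat := Mat (- ma m) (- mb m) (- mc m) (- md m).
Definition mmul (m n : mat) : mat :=
  Mat (ma m * ma n + mb m * mc n) (ma m * mb n + mb m * md n)
      (mc m * ma n + md m * mc n) (mc m * mb n + md m * md n).
(* inverse of a determinant-one matrix *)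
Definition minv (m : mat) : mat := Mat (md m) (- mb m) (- mc m) (ma m).

Definition mob (m : mat) (z : Cplx) : Cplx :=
  Cdiv (Cadd (Cmul (RtoC (ma m)) z) (RtoC (mb m)))
       (Cadd (Cmul (RtoC (mc m)) z) (RtoC (md m))).
(* derivative of z |-> mob m z for det m = 1 *)
Definition mob_deriv (m : mat) (z : Cplx) : Cplx :=
  Cinv (Cpow (Cadd (Cmul (RtoC (mc m)) z) (RtoC (md m))) 2).

Definition alpha0_mat (p : nat) : mat := Mat (2 * cos (PI / INR p)) 1 (-1) 0.
Definition beta0_mat (q : nat) : mat := Mat 0 1 (-1) (2 * cos (PI / INR q)).
Definition pt_a (p : nat) : Cplx := (- cos (PI / INR p), sin (PI / INR p)).
Definition pt_b (q : nat) : Cplx := (cos (PI / INR q), sin (PI / INR q)).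

(* matrices of SL_2(R) whose class in PSL_2(R) lies in Gamma_{p,q} *)
Inductive in_Gamma (p q : nat) : mat -> Prop :=
| G_id : in_Gamma p q mid
| G_neg m : in_Gamma p q m -> in_Gamma p q (mneg m)
| G_a m : in_Gamma p q m -> in_Gamma p q (mmul (alpha0_mat p) m)
| G_ai m : in_Gamma p q m -> in_Gamma p q (mmul (minv (alpha0_mat p)) m)
| G_b m : in_Gamma p q m -> in_Gamma p q (mmul (beta0_mat q) m)
| G_bi m : in_Gamma p q m -> in_Gamma p q (mmul (minv (beta0_mat q)) m).

(* ---------- the universal cover ~SL_2(R) ----------
   An element gamma is a pair (g, L) with g in SL_2(R) (representing P(gamma)
   = class of g in PSL_2(R)) and L a continuous logarithm on H of the
   derivative of the Moebius map g; gamma'(z) = e^{L z} in ~Cplx^x = {e^u}. *)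
Record tilde := Tl { tmat : mat; tlog : Cplx -> Cplx }.

Definition is_lift (g : tilde) : Prop :=
  mdet (tmat g) = 1 /\ continuous_on_H (tlog g) /\
  forall z, UHP z -> Cexp (tlog g z) = mob_deriv (tmat g) z.

Definition teq (g h : tilde) : Prop :=
  (tmat g = tmat h \/ tmat g = mneg (tmat h)) /\
  forall z, UHP z -> tlog g z = tlog h z.

Definition tmul (g h : tilde) : tilde :=
  Tl (mmul (tmat g) (tmat h)) (fun z => Cadd (tlog g (mob (tmat h) z)) (tlog h z)).
Definition tid : tilde := Tl mid (fun _ => C0).
Definition tinv (g : tilde) : tilde :=
  Tl (minv (tmat g)) (fun z => Copp (tlog g (mob (minv (tmat g)) z))).
(* central generator c : P(c) = 1, c' = e^{2 pi i} *)
Definition tc : tilde := Tl mid (fun _ => (0, 2 * PI)).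

Fixpoint tpow (g : tilde) (n : nat) : tilde :=
  match n with O => tid | S m => tmul g (tpow g m) end.
Definition tzpow (g : tilde) (n : Z) : tilde :=
  match n with
  | Z0 => tid
  | Zpos k => tpow g (Pos.to_nat k)
  | Zneg k => tpow (tinv g) (Pos.to_nat k)
  end.

Definition in_tGamma (p q : nat) (g : tilde) : Prop :=
  is_lift g /\ in_Gamma p q (tmat g).

Definition is_alpha (p : nat) (g : tilde) : Prop :=
  is_lift g /\ (tmat g = alpha0_mat p \/ tmat g = mneg (alpha0_mat p)) /\
  teq (tpow g p) tc.
Definition is_beta (q : nat) (g : tilde) : Prop :=
  is_lift g /\ (tmat g = beta0_mat q \/ tmat g = mneg (beta0_mat q)) /\
  teq (tpow g q) tc.

Definition is_character (p q : nat) (chi : tilde -> Cplx) : Prop :=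
  (forall g h, in_tGamma p q g -> in_tGamma p q h -> teq g h -> chi g = chi h) /\
  (forall g h, in_tGamma p q g -> in_tGamma p q h ->
     chi (tmul g h) = Cmul (chi g) (chi h)) /\
  (forall g, in_tGamma p q g -> Cnorm (chi g) = 1).

(* omega = f dz^k : (z, e^u) |-> f z * exp (k u);
   gamma (z, e^u) = (gamma z, e^{L z + u}) *)
Definition omega (k : Q) (f : Cplx -> Cplx) (z u : Cplx) : Cplx :=
  Cmul (f z) (Cexp (Cmul (RtoC (Q2R k)) u)).

Definition chi_automorphic (p q : nat) (chi : tilde -> Cplx) (k : Q) (f : Cplx -> Cplx) : Prop :=
  holomorphic_on_H f /\
  (forall g, in_tGamma p q g -> forall z u, UHP z ->
     omega k f (mob (tmat g) z) (Cadd (tlog g z) u) = Cmul (chi g) (omega k f z u)) /\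
  (exists M, forall z, 1 <= snd z -> Cnorm (f z) <= M).

From Stdlib Require Import Reals ZArith QArith Qreals Lra Lia Psatz Classical ClassicalEpsilon.
Open Scope R_scope.

(* Let [g] fix [a], with [g^m = c] and [g' = e^L]; the form satisfies
   [f (g z) e^{k L z} = chi g * f z]. Write [f = (z - a)^n h] with [h a <> 0]. Since
   [g z - a = (z - a) / (lam * den g z)] where [lam = den g a] satisfies
   [lam^2 = e^{-2 pi i/m}], the automorphy relation divided by [(z - a)^n] reads
   [h (g z) e^{k L z} = chi g * h z * (lam * den g z)^n] for [z <> a]; letting [z -> a]
   gives [e^{k L a} = chi g * lam^(2n)]. Finally [m * L a = 2 pi i] because [g^m = c] and
   [g] fixes [a], so [chi g = e^{2 pi i (k + n)/m}]. The formula for [chi x] follows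
   multiplicatively, using [p p1 + q q1 = 1] to split [k/(pq)]. *)

Definition Cone : Cplx := (1, 0).

Lemma Cring : ring_theory C0 Cone Cadd Cmul Csub Copp (@eq Cplx).
Proof.
  constructor; intros; repeat match goal with x : Cplx |- _ => destruct x end;
  unfold Csub, C0, Cone, Cadd, Cmul, Copp; simpl; f_equal; ring.
Qed.

Lemma Cone_neq_C0 : Cone <> C0.
Proof. intro E; injection E; lra. Qed.

Lemma Cnormsq_pos z : z <> C0 -> 0 < fst z * fst z + snd z * snd z.
Proof.
  destruct z as [x y]; simpl; intro H.
  destruct (Req_dec x 0), (Req_dec y 0); subst; try nra.
  exfalso; apply H; reflexivity.
Qed.

Lemma Cfield : field_theory C0 Cone Cadd Cmul Csub Copp Cdiv Cinv (@eq Cplx).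
Proof.
  constructor; [exact Cring | exact Cone_neq_C0 | reflexivity |].
  intros z Hz; pose proof (Cnormsq_pos z Hz); destruct z as [x y]; simpl in *.
  unfold Cmul, Cinv, Cone; simpl; f_equal; field; nra.
Qed.

Add Field Cfield_inst : Cfield.

Lemma RtoC_mul x y : RtoC (x * y) = Cmul (RtoC x) (RtoC y).
Proof. unfold RtoC, Cmul; simpl; f_equal; ring. Qed.
Lemma RtoC_add x y : RtoC (x + y) = Cadd (RtoC x) (RtoC y).
Proof. unfold RtoC, Cadd; simpl; f_equal; ring. Qed.
Lemma RtoC_opp x : RtoC (- x) = Copp (RtoC x).
Proof. unfold RtoC, Copp; simpl; f_equal; ring. Qed.

Lemma Cmul_cancel c x y : c <> C0 -> Cmul c x = Cmul c y -> x = y.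
Proof.
  intros Hc E; transitivity (Cmul (Cinv c) (Cmul c x)); [field; auto|].
  rewrite E; field; auto.
Qed.

Lemma Cinv_unique a b : Cmul a b = Cone -> b <> C0 -> a = Cinv b.
Proof.
  intros H Hb; transitivity (Cmul (Cmul a b) (Cinv b)); [field; auto|].
  rewrite H; field; auto.
Qed.

Lemma Cmul_neq0 x y : x <> C0 -> y <> C0 -> Cmul x y <> C0.
Proof.
  intros Hx Hy E; apply Hy; transitivity (Cmul (Cinv x) (Cmul x y)); [field; auto|].
  rewrite E; ring.
Qed.

Lemma Cpow_mul x y n : Cpow (Cmul x y) n = Cmul (Cpow x n) (Cpow y n).
Proof. induction n; simpl; [change (Cone = Cmul Cone Cone); ring | rewrite IHn; ring]. Qed.

Lemma Cpow_neq0 x n : x <> C0 -> Cpow x n <> C0.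
Proof. intro H; induction n; [exact Cone_neq_C0 | apply Cmul_neq0; auto]. Qed.

Lemma Csub_neq0 z a : z <> a -> Csub z a <> C0.
Proof.
  intros H E; apply H; destruct z, a; unfold Csub, Cadd, Copp, C0 in E; simpl in E.
  injection E; intros; f_equal; lra.
Qed.

Lemma Cnorm_pair x y : Cnorm (x, y) = sqrt (x * x + y * y).
Proof. unfold Cnorm; simpl; f_equal; ring. Qed.

Lemma Cnorm_C0 : Cnorm C0 = 0.
Proof. unfold C0; rewrite Cnorm_pair, Rmult_0_l, Rplus_0_l; apply sqrt_0. Qed.

Lemma Cnorm_gt0 z : z <> C0 -> 0 < Cnorm z.
Proof. intro H; pose proof (Cnormsq_pos z H); destruct z; rewrite Cnorm_pair; apply sqrt_lt_R0; auto. Qed.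

Lemma Cnorm1_neq0 z : Cnorm z = 1 -> z <> C0.
Proof. intros H ->; rewrite Cnorm_C0 in H; lra. Qed.

Lemma Cnorm_fst z : Rabs (fst z) <= Cnorm z.
Proof.
  destruct z as [x y]; rewrite Cnorm_pair; simpl.
  rewrite <- sqrt_Rsqr_abs; apply sqrt_le_1_alt; unfold Rsqr; nra.
Qed.

Lemma Cnorm_snd z : Rabs (snd z) <= Cnorm z.
Proof.
  destruct z as [x y]; rewrite Cnorm_pair; simpl.
  rewrite <- sqrt_Rsqr_abs; apply sqrt_le_1_alt; unfold Rsqr; nra.
Qed.

Lemma Cnorm_le_sum z : Cnorm z <= Rabs (fst z) + Rabs (snd z).
Proof.
  destruct z as [x y]; rewrite Cnorm_pair; simpl.
  rewrite <- (sqrt_square (Rabs x + Rabs y)) by (split_Rabs; lra).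
  apply sqrt_le_1_alt; split_Rabs; nra.
Qed.

Lemma Cnorm_mul z w : Cnorm (Cmul z w) = Cnorm z * Cnorm w.
Proof.
  destruct z as [a b], w as [c d]; unfold Cmul; simpl; rewrite !Cnorm_pair.
  rewrite <- sqrt_mult_alt by nra; f_equal; ring.
Qed.

Lemma Cnorm_triangle z w : Cnorm (Cadd z w) <= Cnorm z + Cnorm w.
Proof.
  destruct z as [a b], w as [c d]; unfold Cadd; simpl; rewrite !Cnorm_pair.
  set (A := a * a + b * b); set (C := c * c + d * d).
  pose proof (sqrt_sqrt A ltac:(unfold A; nra)) as HA.
  pose proof (sqrt_sqrt C ltac:(unfold C; nra)) as HC.
  pose proof (sqrt_pos A); pose proof (sqrt_pos C).
  (* Cauchy-Schwarz, from Lagrange's identity [A C = (ac + bd)^2 + (ad - bc)^2] *)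
  assert (CS : a * c + b * d <= sqrt A * sqrt C).
  { destruct (Rle_dec (a * c + b * d) 0) as [|Hpos]; [nra|].
    assert (Hsq : (a * c + b * d) * (a * c + b * d) <= (sqrt A * sqrt C) * (sqrt A * sqrt C)).
    { replace ((sqrt A * sqrt C) * (sqrt A * sqrt C)) with ((sqrt A * sqrt A) * (sqrt C * sqrt C))
        by ring.
      rewrite HA, HC; unfold A, C; pose proof (Rle_0_sqr (a * d - b * c)); unfold Rsqr in *; nra. }
    apply Rnot_le_lt in Hpos; assert (0 <= sqrt A * sqrt C) by (apply Rmult_le_pos; lra); nra. }
  rewrite <- (sqrt_square (sqrt A + sqrt C)) by lra.
  apply sqrt_le_1_alt; unfold A, C in *; nra.
Qed.

Lemma Cexp_add x y : Cexp (Cadd x y) = Cmul (Cexp x) (Cexp y).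
Proof.
  destruct x, y; unfold Cexp, Cadd, Cmul; simpl.
  rewrite exp_plus, cos_plus, sin_plus; f_equal; ring.
Qed.

Lemma Cexp_C0 : Cexp C0 = Cone.
Proof. unfold Cexp, C0, Cone; simpl; rewrite exp_0, cos_0, sin_0; f_equal; ring. Qed.

Lemma Cexp_neq0 x : Cexp x <> C0.
Proof.
  intro E; apply Cone_neq_C0.
  rewrite <- Cexp_C0; replace C0 with (Cadd x (Copp x)) at 1 by ring.
  rewrite Cexp_add, E; ring.
Qed.

Lemma Cexp_opp x : Cexp (Copp x) = Cinv (Cexp x).
Proof.
  apply Cinv_unique; [|apply Cexp_neq0].
  rewrite <- Cexp_add, <- Cexp_C0; f_equal; ring.
Qed.

Definition Ccv (u : nat -> Cplx) (l : Cplx) : Prop :=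
  Un_cv (fun n => fst (u n)) (fst l) /\ Un_cv (fun n => snd (u n)) (snd l).

Definition continuous_at_H (F : Cplx -> Cplx) (z0 : Cplx) : Prop :=
  forall eps, 0 < eps -> exists delta, 0 < delta /\
    forall z, UHP z -> Cnorm (Csub z z0) < delta -> Cnorm (Csub (F z) (F z0)) < eps.

Lemma Un_cv_const c : Un_cv (fun _ => c) c.
Proof. intros eps He; exists 0%nat; intros; unfold R_dist; rewrite Rminus_diag, Rabs_R0; lra. Qed.

Lemma Ccv_ext u v l : (forall n, u n = v n) -> Ccv u l -> Ccv v l.
Proof.
  intros H [H1 H2]; split;
  [apply (Un_cv_ext (fun n => fst (u n))) | apply (Un_cv_ext (fun n => snd (u n)))];
  auto; intro n; rewrite H; auto.
Qed.

Lemma Ccv_const c : Ccv (fun _ => c) c.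
Proof. split; apply Un_cv_const. Qed.

Lemma Ccv_add u v a b : Ccv u a -> Ccv v b -> Ccv (fun n => Cadd (u n) (v n)) (Cadd a b).
Proof. intros [H1 H2] [H3 H4]; split; simpl; apply CV_plus; auto. Qed.

Lemma Ccv_opp u a : Ccv u a -> Ccv (fun n => Copp (u n)) (Copp a).
Proof. intros [H1 H2]; split; simpl; apply CV_opp; auto. Qed.

Lemma Ccv_mul u v a b : Ccv u a -> Ccv v b -> Ccv (fun n => Cmul (u n) (v n)) (Cmul a b).
Proof.
  intros [H1 H2] [H3 H4]; split; simpl;
  [apply CV_minus | apply CV_plus]; apply CV_mult; auto.
Qed.

Lemma Ccv_pow u a m : Ccv u a -> Ccv (fun n => Cpow (u n) m) (Cpow a m).
Proof. intro H; induction m; simpl; [apply Ccv_const | apply Ccv_mul; auto]. Qed.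

Lemma Ccv_exp u a : Ccv u a -> Ccv (fun n => Cexp (u n)) (Cexp a).
Proof.
  assert (Cexp_R : continuity exp) by (intro; apply derivable_continuous_pt, derivable_pt_exp).
  intros [H1 H2]; split; simpl; apply CV_mult; apply continuity_seq; auto;
  (apply continuity_cos || apply continuity_sin).
Qed.

Lemma Ccv_inv u a : a <> C0 -> Ccv u a -> Ccv (fun n => Cinv (u n)) (Cinv a).
Proof.
  intros Ha [H1 H2].
  assert (Hr : fst a ^ 2 + snd a ^ 2 <> 0) by (pose proof (Cnormsq_pos a Ha); nra).
  assert (Hinv : Un_cv (fun n => / (fst (u n) ^ 2 + snd (u n) ^ 2)) (/ (fst a ^ 2 + snd a ^ 2))).
  { apply (continuity_seq Rinv (fun n => fst (u n) ^ 2 + snd (u n) ^ 2)).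
    - apply (continuity_pt_inv (fun x => x)); auto; apply derivable_continuous_pt, derivable_pt_id.
    - simpl; apply CV_plus; repeat apply CV_mult; auto; apply Un_cv_const. }
  split; simpl; unfold Rdiv; apply CV_mult; auto; apply CV_opp; auto.
Qed.

Lemma Ccv_unique u a b : Ccv u a -> Ccv u b -> a = b.
Proof. intros [H1 H2] [H3 H4]; destruct a, b; f_equal; eapply UL_sequence; eauto. Qed.

Lemma Ccv_Cnorm u l :
  Ccv u l <-> forall d, 0 < d -> exists N, forall n, (n >= N)%nat -> Cnorm (Csub (u n) l) < d.
Proof.
  split.
  - intros [H1 H2] d Hd.
    destruct (H1 (d / 2)) as [N1 HN1]; [lra|]; destruct (H2 (d / 2)) as [N2 HN2]; [lra|].
    exists (max N1 N2); intros n Hn.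
    eapply Rle_lt_trans; [apply Cnorm_le_sum|].
    specialize (HN1 n ltac:(lia)); specialize (HN2 n ltac:(lia)); unfold R_dist in *.
    destruct (u n), l; simpl in *; unfold Rminus in *; lra.
  - intro H; split; intros eps He; destruct (H eps He) as [N HN]; exists N; intros n Hn;
    specialize (HN n Hn); unfold R_dist;
    [pose proof (Cnorm_fst (Csub (u n) l)) | pose proof (Cnorm_snd (Csub (u n) l))];
    destruct (u n), l; simpl in *; unfold Rminus; lra.
Qed.

Lemma continuous_at_H_seq F z0 w : continuous_at_H F z0 -> (forall n, UHP (w n)) ->
  Ccv w z0 -> Ccv (fun n => F (w n)) (F z0).
Proof.
  intros HF Hw Hc; apply Ccv_Cnorm; intros d Hd.
  destruct (HF d Hd) as [de [Hde Hf]]; destruct (proj1 (Ccv_Cnorm w z0) Hc de Hde) as [N HN].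
  exists N; intros n Hn; apply Hf; auto.
Qed.

Lemma seq_continuous_at_H F z0 : UHP z0 ->
  (forall w, (forall n, UHP (w n)) -> Ccv w z0 -> Ccv (fun n => F (w n)) (F z0)) ->
  continuous_at_H F z0.
Proof.
  intros Hz Hseq eps He; apply NNPP; intro Hn.
  assert (Hex : forall n : nat, exists z, UHP z /\ Cnorm (Csub z z0) < / INR (S n) /\
                 eps <= Cnorm (Csub (F z) (F z0))).
  { intro n; apply NNPP; intro Hn2; apply Hn; exists (/ INR (S n)); split.
    - apply Rinv_0_lt_compat, lt_0_INR; lia.
    - intros z Hz1 Hd; apply Rnot_le_lt; intro Hle; apply Hn2; exists z; auto. }
  destruct (choice _ Hex) as [w Hw].
  assert (Hc : Ccv w z0).
  { apply Ccv_Cnorm; intros d Hd; destruct (archimed_cor1 d Hd) as [N [HN1 HN2]].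
    exists N; intros n Hnn; destruct (Hw n) as [_ [H _]]; eapply Rlt_trans; [apply H|].
    eapply Rle_lt_trans; [|apply HN1]; apply Rinv_le_contravar; [apply lt_0_INR; auto|].
    apply le_INR; lia. }
  destruct (proj1 (Ccv_Cnorm _ _) (Hseq w (fun n => proj1 (Hw n)) Hc) eps He) as [N HN].
  specialize (HN N (le_n _)); destruct (Hw N) as [_ [_ H]]; lra.
Qed.

Lemma differentiable_continuous_at_H g a : C_differentiable_at g a -> continuous_at_H g a.
Proof.
  intros [l Hl] eps He; destruct (Hl 1 Rlt_0_1) as [d1 [Hd1 H1]].
  pose proof (sqrt_pos (fst l ^ 2 + snd l ^ 2)); fold (Cnorm l) in *.
  exists (Rmin d1 (eps / (Cnorm l + 1))); split.
  { apply Rmin_glb_lt; auto; apply Rdiv_lt_0_compat; lra. }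
  intros z Hz Hd.
  destruct (classic (z = a)) as [->|E].
  { replace (Csub (g a) (g a)) with C0 by ring; rewrite Cnorm_C0; auto. }
  pose proof (Csub_neq0 _ _ E) as Hne; pose proof (Cnorm_gt0 _ Hne).
  pose proof (Rmin_l d1 (eps / (Cnorm l + 1))); pose proof (Rmin_r d1 (eps / (Cnorm l + 1))).
  specialize (H1 z ltac:(split; lra)).
  set (D := Cdiv (Csub (g z) (g a)) (Csub z a)) in *.
  assert (HD : Cnorm D < Cnorm l + 1).
  { replace D with (Cadd (Csub D l) l) by ring.
    eapply Rle_lt_trans; [apply Cnorm_triangle|]; lra. }
  replace (Csub (g z) (g a)) with (Cmul D (Csub z a)) by (unfold D; field; auto).
  rewrite Cnorm_mul.
  apply Rle_lt_trans with ((Cnorm l + 1) * Cnorm (Csub z a)); [apply Rmult_le_compat_r; lra|].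
  replace eps with ((Cnorm l + 1) * (eps / (Cnorm l + 1))) by (field; lra).
  apply Rmult_lt_compat_l; lra.
Qed.

Definition num (M : mat) (z : Cplx) : Cplx := Cadd (Cmul (RtoC (ma M)) z) (RtoC (mb M)).
Definition den (M : mat) (z : Cplx) : Cplx := Cadd (Cmul (RtoC (mc M)) z) (RtoC (md M)).

Lemma mob_num_den M z : mob M z = Cdiv (num M z) (den M z).
Proof. reflexivity. Qed.

Lemma mob_deriv_den M z : mob_deriv M z = Cinv (Cmul (den M z) (den M z)).
Proof. unfold mob_deriv; simpl; f_equal; change (1, 0) with Cone; fold (den M z); ring. Qed.

Lemma Ccv_den M z0 w : Ccv w z0 -> Ccv (fun n => den M (w n)) (den M z0).
Proof. intro H; apply Ccv_add; [apply Ccv_mul; [apply Ccv_const | auto] | apply Ccv_const]. Qed.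

Lemma mdet_mmul g h : mdet (mmul g h) = mdet g * mdet h.
Proof. destruct g, h; unfold mdet, mmul; simpl; ring. Qed.
Lemma mdet_minv g : mdet (minv g) = mdet g.
Proof. destruct g; unfold mdet, minv; simpl; ring. Qed.
Lemma mmul_minv g : mdet g = 1 -> mmul g (minv g) = mid.
Proof. destruct g; unfold mdet, mmul, minv, mid; simpl; intro; f_equal; lra. Qed.
Lemma mmul_1m M : mmul mid M = M.
Proof. destruct M; unfold mmul, mid; simpl; f_equal; ring. Qed.
Lemma mmul_m1 M : mmul M mid = M.
Proof. destruct M; unfold mmul, mid; simpl; f_equal; ring. Qed.
Lemma mmul_mnegl G N : mmul (mneg G) N = mneg (mmul G N).
Proof. destruct G, N; unfold mmul, mneg; simpl; f_equal; ring. Qed.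
Lemma minv_mneg G : minv (mneg G) = mneg (minv G).
Proof. destruct G; unfold minv, mneg; simpl; f_equal; ring. Qed.

Lemma den_mid z : den mid z = Cone.
Proof. unfold den, mid, RtoC; simpl; change (0, 0) with C0; change (1, 0) with Cone; ring. Qed.

Lemma den_neq0 M z : mdet M = 1 -> UHP z -> den M z <> C0.
Proof.
  destruct M as [a b c d], z as [x y]; unfold mdet, UHP, den, C0, RtoC, Cadd, Cmul; simpl.
  intros Hd Hy E; injection E; intros E1 E2.
  assert (c = 0) by nra; subst; assert (d = 0) by nra; subst; lra.
Qed.

(* [Im (M z) = det M * Im z / |den M z|^2] *)
Lemma mob_UHP M z : mdet M = 1 -> UHP z -> UHP (mob M z).
Proof.
  intros Hd Hz; pose proof (Cnormsq_pos _ (den_neq0 M z Hd Hz)) as Hp.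
  revert Hd Hz Hp; destruct M as [a b c d], z as [x y];
  unfold mdet, UHP, den, mob, Cdiv, Cinv, C0, RtoC, Cadd, Cmul; simpl; intros Hd Hz Hp.
  match goal with |- 0 < ?G => replace G with (y * (a * d - b * c) /
    ((c * x - 0 * y + d) * (c * x - 0 * y + d) + (c * y + 0 * x + 0) * (c * y + 0 * x + 0)))
    by (field; lra) end.
  rewrite Hd; apply Rdiv_lt_0_compat; lra.
Qed.

Lemma num_mmul g M z : den M z <> C0 -> num (mmul g M) z = Cmul (num g (mob M z)) (den M z).
Proof.
  intro H; rewrite mob_num_den; revert H; unfold den, num, mmul; simpl.
  rewrite !RtoC_add, !RtoC_mul; intro H; field; auto.
Qed.

Lemma den_mmul g M z : den M z <> C0 -> den (mmul g M) z = Cmul (den g (mob M z)) (den M z).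
Proof.
  intro H; rewrite mob_num_den; revert H; unfold den, num, mmul; simpl.
  rewrite !RtoC_add, !RtoC_mul; intro H; field; auto.
Qed.

Lemma mob_deriv_mmul g M z : mdet g = 1 -> mdet M = 1 -> UHP z ->
  mob_deriv (mmul g M) z = Cmul (mob_deriv g (mob M z)) (mob_deriv M z).
Proof.
  intros Hg HM Hz; rewrite !mob_deriv_den.
  pose proof (den_neq0 M z HM Hz); pose proof (den_neq0 g _ Hg (mob_UHP M z HM Hz)).
  rewrite den_mmul by auto; field; auto.
Qed.

Lemma mob_deriv_minv g z : mdet g = 1 -> UHP z ->
  mob_deriv (minv g) z = Cinv (mob_deriv g (mob (minv g) z)).
Proof.
  intros Hg Hz; assert (Hi : mdet (minv g) = 1) by (rewrite mdet_minv; auto).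
  pose proof (den_neq0 _ z Hi Hz) as H1.
  pose proof (den_mmul g (minv g) z H1) as E; rewrite mmul_minv, den_mid in E by auto.
  assert (E2 : den g (mob (minv g) z) = Cinv (den (minv g) z)) by (apply Cinv_unique; auto).
  rewrite !mob_deriv_den, E2; field; split; [auto | exact Cone_neq_C0].
Qed.

Lemma Ccv_mob M z0 w : mdet M = 1 -> UHP z0 -> Ccv w z0 ->
  Ccv (fun n => mob M (w n)) (mob M z0).
Proof.
  intros HM Hz Hc; unfold mob, Cdiv; apply Ccv_mul.
  - apply Ccv_add; [apply Ccv_mul; [apply Ccv_const | auto] | apply Ccv_const].
  - apply Ccv_inv; [exact (den_neq0 M z0 HM Hz) | exact (Ccv_den M z0 w Hc)].
Qed.

Lemma continuous_on_H_comp_mob F M : mdet M = 1 -> continuous_on_H F ->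
  continuous_on_H (fun z => F (mob M z)).
Proof.
  intros HM HF z0 Hz0; refine (seq_continuous_at_H _ z0 Hz0 _); intros w Hw Hc.
  apply (continuous_at_H_seq F (mob M z0)); [exact (HF _ (mob_UHP M z0 HM Hz0)) | |].
  - intro n; apply mob_UHP; auto.
  - apply Ccv_mob; auto.
Qed.

Lemma is_lift_tid : is_lift tid.
Proof.
  split; [unfold mdet, mid; simpl; ring | split].
  - intros z0 _ eps He; exists 1; split; [lra|]; intros.
    simpl; replace (Csub C0 C0) with C0 by ring; rewrite Cnorm_C0; auto.
  - intros z Hz; simpl; rewrite Cexp_C0, mob_deriv_den, den_mid; field; exact Cone_neq_C0.
Qed.

Lemma is_lift_tmul g h : is_lift g -> is_lift h -> is_lift (tmul g h).
Proof.
  intros [Dg [Cg Eg]] [Dh [Ch Eh]]; unfold is_lift, tmul; simpl; split; [|split].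
  - rewrite mdet_mmul, Dg, Dh; ring.
  - intros z0 Hz0; refine (seq_continuous_at_H _ z0 Hz0 _); intros w Hw Hc; apply Ccv_add.
    + exact (continuous_at_H_seq _ z0 w (continuous_on_H_comp_mob _ _ Dh Cg z0 Hz0) Hw Hc).
    + exact (continuous_at_H_seq _ z0 w (Ch z0 Hz0) Hw Hc).
  - intros z Hz; rewrite Cexp_add, Eg, Eh by (auto; apply mob_UHP; auto).
    symmetry; apply mob_deriv_mmul; auto.
Qed.

Lemma is_lift_tinv g : is_lift g -> is_lift (tinv g).
Proof.
  intros [Dg [Cg Eg]]; assert (Di : mdet (minv (tmat g)) = 1) by (rewrite mdet_minv; auto).
  unfold is_lift, tinv; simpl; split; [|split]; auto.
  - intros z0 Hz0; refine (seq_continuous_at_H _ z0 Hz0 _); intros w Hw Hc; apply Ccv_opp.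
    exact (continuous_at_H_seq _ z0 w (continuous_on_H_comp_mob _ _ Di Cg z0 Hz0) Hw Hc).
  - intros z Hz; rewrite Cexp_opp, Eg by (apply mob_UHP; auto).
    symmetry; apply mob_deriv_minv; auto.
Qed.

(* [M] fixes [a], and [lam = den M a], so that [M'(a) = lam^-2] *)
Definition fixed_point (M : mat) (a lam : Cplx) : Prop :=
  num M a = Cmul a lam /\ den M a = lam /\ lam <> C0.

Lemma fixed_point_mob M a lam : fixed_point M a lam -> mob M a = a.
Proof. intros [H1 [H2 H3]]; rewrite mob_num_den, H1, H2; field; auto. Qed.

Lemma fixed_point_mid a : fixed_point mid a Cone.
Proof.
  unfold fixed_point, num, den, mid, RtoC; simpl; change (0, 0) with C0; change (1, 0) with Cone.
  split; [ring | split; [ring | exact Cone_neq_C0]].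
Qed.

Lemma fixed_point_mmul g h a l1 l2 :
  fixed_point g a l1 -> fixed_point h a l2 -> fixed_point (mmul g h) a (Cmul l1 l2).
Proof.
  intros Hg Hh; pose proof (fixed_point_mob _ _ _ Hh) as Eh.
  destruct Hg as [G1 [G2 G3]], Hh as [H1 [H2 H3]].
  assert (Hd : den h a <> C0) by (rewrite H2; auto).
  unfold fixed_point; rewrite num_mmul, den_mmul, Eh, G1, G2, H2 by auto.
  split; [ring | split; [ring | apply Cmul_neq0; auto]].
Qed.

Lemma fixed_point_mneg M a lam : fixed_point M a lam -> fixed_point (mneg M) a (Copp lam).
Proof.
  intros [H1 [H2 H3]]; unfold fixed_point; revert H1 H2; unfold num, den, mneg; simpl.
  rewrite !RtoC_opp; intros H1 H2; split; [|split].
  - transitivity (Copp (Cadd (Cmul (RtoC (ma M)) a) (RtoC (mb M)))); [ring | rewrite H1; ring].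
  - transitivity (Copp (Cadd (Cmul (RtoC (mc M)) a) (RtoC (md M)))); [ring | rewrite H2; ring].
  - intro E; apply H3; transitivity (Copp (Copp lam)); [ring | rewrite E; ring].
Qed.

Lemma mob_sub_fixed_point M a lam z : mdet M = 1 -> fixed_point M a lam -> den M z <> C0 ->
  Cmul (Csub (mob M z) a) (Cmul lam (den M z)) = Csub z a.
Proof.
  intros Hdet [HB [HD _]] Hz; rewrite mob_num_den; revert HB HD Hz; unfold num, den.
  assert (Hd : Csub (Cmul (RtoC (ma M)) (RtoC (md M))) (Cmul (RtoC (mb M)) (RtoC (mc M))) = Cone).
  { rewrite <- !RtoC_mul; unfold Csub; rewrite <- RtoC_opp, <- RtoC_add.
    change (RtoC (mdet M) = Cone); rewrite Hdet; reflexivity. }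
  revert Hd; generalize (RtoC (ma M)) (RtoC (mb M)) (RtoC (mc M)) (RtoC (md M)).
  intros A B C D Hd HB HD Hz.
  transitivity (Cmul (Csub (Cadd (Cmul A z) B) (Cmul a (Cadd (Cmul C z) D))) lam);
    [field; auto|].
  assert (HB' : B = Csub (Cmul a lam) (Cmul A a)) by (rewrite <- HB; ring).
  assert (HD' : D = Csub lam (Cmul C a)) by (rewrite <- HD; ring).
  transitivity (Cmul (Csub z a) (Csub (Cmul A D) (Cmul B C))); [|rewrite Hd; ring].
  rewrite HB', HD'; ring.
Qed.

Lemma Ccv_punctured a : UHP a -> exists w, (forall n, UHP (w n) /\ w n <> a) /\ Ccv w a.
Proof.
  intro Ha; exists (fun n => Cadd a (0, / INR (S n))).
  assert (Hpos : forall n, 0 < / INR (S n)) by (intro; apply Rinv_0_lt_compat, lt_0_INR; lia).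
  split.
  - intro n; specialize (Hpos n); unfold UHP, Cadd in *; destruct a as [x y]; simpl in *.
    split; [lra | intro E; injection E; lra].
  - apply Ccv_Cnorm; intros d Hd; destruct (archimed_cor1 d Hd) as [N [HN1 HN2]].
    exists N; intros n Hn.
    replace (Csub (Cadd a (0, / INR (S n))) a) with ((0, / INR (S n)) : Cplx)
      by (destruct a; unfold Csub, Cadd, Copp; simpl; f_equal; ring).
    rewrite Cnorm_pair, Rmult_0_l, Rplus_0_l, sqrt_square by (left; auto).
    eapply Rle_lt_trans; [|apply HN1]; apply Rinv_le_contravar; [apply lt_0_INR; lia|].
    apply le_INR; lia.
Qed.

Section AutomorphyAtFixedPoint.

Variables (M : mat) (L : Cplx -> Cplx) (a lam ch : Cplx) (k : R) (f g : Cplx -> Cplx) (n : nat).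
Hypotheses (Hdet : mdet M = 1) (Ha : UHP a) (Hfix : fixed_point M a lam).
Hypotheses (Hf : forall z, UHP z -> f z = Cmul (Cpow (Csub z a) n) (g z)).
Hypothesis (Haut : forall z, UHP z ->
  Cmul (f (mob M z)) (Cexp (Cmul (RtoC k) (L z))) = Cmul ch (f z)).

Lemma automorphy_divided z : UHP z -> z <> a ->
  Cmul (g (mob M z)) (Cexp (Cmul (RtoC k) (L z))) =
  Cmul ch (Cmul (g z) (Cpow (Cmul lam (den M z)) n)).
Proof.
  intros Hz Hza; pose proof (Haut z Hz) as E.
  rewrite (Hf _ (mob_UHP M z Hdet Hz)), (Hf z Hz) in E.
  apply (Cmul_cancel (Cpow (Csub z a) n)); [apply Cpow_neq0, Csub_neq0; auto|].
  rewrite <- (mob_sub_fixed_point M a lam z Hdet Hfix (den_neq0 M z Hdet Hz)) at 1.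
  rewrite Cpow_mul.
  transitivity (Cmul (Cpow (Cmul lam (den M z)) n) (Cmul (Cmul (Cpow (Csub (mob M z) a) n)
    (g (mob M z))) (Cexp (Cmul (RtoC k) (L z))))); [ring | rewrite E; ring].
Qed.

Lemma automorphy_at_fixed_point : continuous_on_H L -> holomorphic_on_H g -> g a <> C0 ->
  Cexp (Cmul (RtoC k) (L a)) = Cmul ch (Cpow (Cmul lam lam) n).
Proof.
  intros HL Hg Hga.
  pose proof (fixed_point_mob _ _ _ Hfix) as Hmob.
  assert (Hgc : continuous_at_H g a) by (apply differentiable_continuous_at_H, Hg, Ha).
  destruct (Ccv_punctured a Ha) as [w [Hw Hc]].
  assert (HwH : forall j, UHP (w j)) by (intro; apply Hw).
  set (lhs := fun j => Cmul (g (mob M (w j))) (Cexp (Cmul (RtoC k) (L (w j))))).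
  assert (C1 : Ccv lhs (Cmul (g a) (Cexp (Cmul (RtoC k) (L a))))).
  { apply Ccv_mul.
    - rewrite <- Hmob; rewrite <- Hmob in Hgc.
      apply continuous_at_H_seq; auto; [intro j; apply mob_UHP; auto | apply Ccv_mob; auto].
    - apply Ccv_exp, Ccv_mul; [apply Ccv_const | exact (continuous_at_H_seq _ a w (HL a Ha) HwH Hc)]. }
  assert (C2 : Ccv lhs (Cmul ch (Cmul (g a) (Cpow (Cmul lam (den M a)) n)))).
  { eapply Ccv_ext; [intro j; symmetry; apply automorphy_divided; apply Hw|].
    apply Ccv_mul; [apply Ccv_const | apply Ccv_mul; [apply continuous_at_H_seq; auto|]].
    apply Ccv_pow, Ccv_mul; [apply Ccv_const | apply Ccv_den; auto]. }
  pose proof (Ccv_unique _ _ _ C1 C2) as U; destruct Hfix as [_ [HD _]]; rewrite HD in U.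
  apply (Cmul_cancel (g a)); auto; rewrite U; ring.
Qed.

End AutomorphyAtFixedPoint.

Lemma tpow_fixed_point g a lam m : fixed_point (tmat g) a lam ->
  fixed_point (tmat (tpow g m)) a (Cpow lam m) /\
  tlog (tpow g m) a = Cmul (RtoC (INR m)) (tlog g a).
Proof.
  intro Hf; induction m as [|m [IH1 IH2]]; simpl tpow.
  - split; [apply fixed_point_mid | cbn [tlog tid INR]; unfold RtoC; change (0, 0) with C0; ring].
  - split; [apply fixed_point_mmul; auto|].
    unfold tmul; cbn [tlog tmat]; rewrite (fixed_point_mob _ _ _ IH1), IH2, S_INR, RtoC_add.
    change (RtoC 1) with Cone; ring.
Qed.

Lemma tlog_fixed_point g a lam m : (0 < m)%nat -> UHP a -> fixed_point (tmat g) a lam ->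
  teq (tpow g m) tc -> tlog g a = (0, 2 * PI / INR m).
Proof.
  intros Hm Ha Hf [_ Ht]; specialize (Ht a Ha).
  rewrite (proj2 (tpow_fixed_point g a lam m Hf)) in Ht; unfold tc in Ht; cbn [tlog] in Ht.
  assert (INR m <> 0) by (apply not_0_INR; lia).
  destruct (tlog g a) as [x y]; unfold Cmul, RtoC in Ht; simpl in Ht.
  injection Ht; intros E1 E2; f_equal; apply (Rmult_eq_reg_l (INR m)); auto; [lra|].
  rewrite <- E1; field; auto.
Qed.

Definition cis (t : R) : Cplx := (cos t, sin t).

Lemma e2pii_cis x : e2pii x = cis (2 * PI * x).
Proof. unfold e2pii, Cexp, cis; simpl; rewrite exp_0; f_equal; ring. Qed.

Lemma cis_0 : cis 0 = Cone.
Proof. unfold cis, Cone; rewrite cos_0, sin_0; reflexivity. Qed.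

Lemma cis_add s t : cis (s + t) = Cmul (cis s) (cis t).
Proof. unfold cis, Cmul; simpl; rewrite cos_plus, sin_plus; f_equal; ring. Qed.

Lemma cis_pow t m : Cpow (cis t) m = cis (INR m * t).
Proof.
  induction m; [rewrite Rmult_0_l, cis_0; reflexivity|].
  simpl Cpow; rewrite IHm, <- cis_add, S_INR; f_equal; ring.
Qed.

Lemma cis_neq0 t : cis t <> C0.
Proof. intro E; pose proof (sin2_cos2 t); unfold cis, C0, Rsqr in *; injection E; intros; nra. Qed.

Lemma cis_opp t : cis (- t) = Cinv (cis t).
Proof.
  apply Cinv_unique; [rewrite <- cis_add, Rplus_opp_l; apply cis_0 | apply cis_neq0].
Qed.

Lemma Cexp_imaginary k t : Cexp (Cmul (RtoC k) (0, t)) = cis (k * t).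
Proof.
  unfold Cexp, cis, Cmul, RtoC; simpl.
  replace (k * 0 - 0 * t) with 0 by ring; replace (k * t + 0 * 0) with (k * t) by ring.
  rewrite exp_0, !Rmult_1_l; reflexivity.
Qed.

Lemma automorphy_factor_elliptic (g : tilde) (m : nat) (pt lam ch : Cplx) (k : R)
  (f : Cplx -> Cplx) (n : nat) :
  (0 < m)%nat -> is_lift g -> teq (tpow g m) tc -> fixed_point (tmat g) pt lam ->
  Cmul lam lam = cis (- (2 * PI / INR m)) -> UHP pt -> vanishing_order f pt n ->
  (forall z, UHP z -> Cmul (f (mob (tmat g) z)) (Cexp (Cmul (RtoC k) (tlog g z))) = Cmul ch (f z)) ->
  ch = cis (2 * PI * ((k + INR n) / INR m)).
Proof.
  intros Hm [Hdet [Hc _]] Ht Hfx Hl Hpt [h [Hh [Hh0 Hfh]]] Haut.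
  pose proof (automorphy_at_fixed_point (tmat g) (tlog g) pt lam ch k f h n Hdet Hpt Hfx Hfh Haut
                Hc Hh Hh0) as E.
  rewrite (tlog_fixed_point g pt lam m Hm Hpt Hfx Ht), Hl, cis_pow, Cexp_imaginary in E.
  assert (INR m <> 0) by (apply not_0_INR; lia).
  set (w := cis (INR n * - (2 * PI / INR m))) in E.
  apply (Cmul_cancel w); [apply cis_neq0|].
  transitivity (Cmul ch w); [ring|]; rewrite <- E; unfold w; rewrite <- cis_add.
  f_equal; field; auto.
Qed.

Definition Gamma_stable (p q : nat) (M : mat) : Prop :=
  forall N, in_Gamma p q N -> in_Gamma p q (mmul M N).

Lemma Gamma_stable_in p q M : Gamma_stable p q M -> in_Gamma p q M.
Proof. intro H; rewrite <- mmul_m1; apply H, G_id. Qed.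

Lemma Gamma_stable_pm p q M G : (G = M \/ G = mneg M) ->
  Gamma_stable p q M -> Gamma_stable p q (minv M) ->
  Gamma_stable p q G /\ Gamma_stable p q (minv G).
Proof.
  intros [-> | ->] H1 H2; auto; rewrite minv_mneg.
  split; intros N HN; rewrite mmul_mnegl; apply G_neg; auto.
Qed.

Lemma in_tGamma_tid p q : in_tGamma p q tid.
Proof. split; [apply is_lift_tid | apply G_id]. Qed.

Lemma in_tGamma_tpow p q g m : is_lift g -> Gamma_stable p q (tmat g) -> in_tGamma p q (tpow g m).
Proof.
  intros Hl Hg; induction m as [|m [I1 I2]]; [apply in_tGamma_tid|].
  split; [apply is_lift_tmul | apply Hg]; auto.
Qed.

Section Characters.

Variables (p q : nat) (chi : tilde -> Cplx).
Hypothesis Hchi : is_character p q chi.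

Lemma chi_tid : chi tid = Cone.
Proof.
  destruct Hchi as [Ht [Hm Hn]].
  assert (I2 : in_tGamma p q (tmul tid tid)).
  { split; [apply is_lift_tmul; apply is_lift_tid | simpl; rewrite mmul_1m; apply G_id]. }
  assert (E : chi (tmul tid tid) = chi tid).
  { apply Ht; auto; [apply in_tGamma_tid|]; split; [left; apply mmul_1m|].
    intros z _; simpl; change (0, 0) with C0; ring. }
  rewrite Hm in E by apply in_tGamma_tid.
  apply (Cmul_cancel (chi tid)); [apply Cnorm1_neq0, Hn, in_tGamma_tid|].
  rewrite E; ring.
Qed.

Lemma chi_tpow g m : is_lift g -> Gamma_stable p q (tmat g) -> chi (tpow g m) = Cpow (chi g) m.
Proof.
  intros Hl Hg; induction m; [apply chi_tid|].
  simpl; destruct Hchi as [_ [Hm _]]; rewrite Hm, IHm; auto.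
  - split; [|apply Gamma_stable_in]; auto.
  - apply in_tGamma_tpow; auto.
Qed.

Lemma chi_tinv g : is_lift g -> Gamma_stable p q (tmat g) -> Gamma_stable p q (minv (tmat g)) ->
  chi (tinv g) = Cinv (chi g).
Proof.
  intros Hl Hg Hgi; pose proof chi_tid as E1; destruct Hchi as [Ht [Hm Hn]].
  assert (Ig : in_tGamma p q g) by (split; [|apply Gamma_stable_in]; auto).
  assert (Ii : in_tGamma p q (tinv g)) by (split; [apply is_lift_tinv | apply Gamma_stable_in]; auto).
  assert (Ip : in_tGamma p q (tmul g (tinv g))).
  { split; [apply is_lift_tmul, is_lift_tinv; auto|].
    simpl; rewrite mmul_minv by apply Hl; apply G_id. }
  assert (E : chi (tmul g (tinv g)) = chi tid).
  { apply Ht; auto; [apply in_tGamma_tid|]; split; [left; apply mmul_minv, Hl|].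
    intros z _; simpl; change (0, 0) with C0; ring. }
  rewrite Hm, E1 in E by auto.
  apply Cinv_unique; [rewrite <- E; ring | apply Cnorm1_neq0, Hn, Ig].
Qed.

Lemma chi_tzpow g u z : is_lift g -> Gamma_stable p q (tmat g) ->
  Gamma_stable p q (minv (tmat g)) -> chi g = cis (2 * PI * u) ->
  in_tGamma p q (tzpow g z) /\ chi (tzpow g z) = cis (2 * PI * u * IZR z).
Proof.
  intros Hl Hg Hgi Hu; destruct z as [|k|k]; simpl tzpow.
  - rewrite chi_tid, Rmult_0_r, cis_0; split; [apply in_tGamma_tid | reflexivity].
  - split; [apply in_tGamma_tpow; auto|].
    rewrite chi_tpow, Hu, cis_pow by auto; f_equal.
    rewrite INR_IZR_INZ, positive_nat_Z; ring.
  - assert (Hli : is_lift (tinv g)) by (apply is_lift_tinv; auto).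
    split; [apply in_tGamma_tpow; auto|].
    rewrite chi_tpow, chi_tinv, Hu, <- cis_opp, cis_pow by auto; f_equal.
    rewrite <- Pos2Z.opp_pos, opp_IZR, INR_IZR_INZ, positive_nat_Z; ring.
Qed.

End Characters.

Lemma automorphy_relation p q chi k f g : chi_automorphic p q chi k f -> in_tGamma p q g ->
  forall z, UHP z ->
  Cmul (f (mob (tmat g) z)) (Cexp (Cmul (RtoC (Q2R k)) (tlog g z))) = Cmul (chi g) (f z).
Proof.
  intros [_ [Haut _]] Hg z Hz; specialize (Haut g Hg z C0 Hz); unfold omega in Haut.
  replace (Cadd (tlog g z) C0) with (tlog g z) in Haut by ring.
  replace (Cmul (RtoC (Q2R k)) C0) with C0 in Haut by ring.
  rewrite Cexp_C0 in Haut; rewrite Haut; ring.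
Qed.

Lemma chi_elliptic p q chi k f (g : tilde) (m : nat) (M : mat) (pt lam : Cplx) (n : nat) :
  (0 < m)%nat -> is_lift g -> (tmat g = M \/ tmat g = mneg M) -> teq (tpow g m) tc ->
  fixed_point M pt lam -> Cmul lam lam = cis (- (2 * PI / INR m)) -> UHP pt ->
  vanishing_order f pt n -> chi_automorphic p q chi k f -> in_tGamma p q g ->
  chi g = cis (2 * PI * ((Q2R k + INR n) / INR m)).
Proof.
  intros Hm Hl HM Ht Hfx Hsq Hpt Hv Hf Hg.
  pose proof (automorphy_relation p q chi k f g Hf Hg) as Haut.
  destruct HM as [HM | HM].
  - apply (automorphy_factor_elliptic g m pt lam _ _ f n); auto; rewrite HM; auto.
  - apply (automorphy_factor_elliptic g m pt (Copp lam) _ _ f n); auto.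
    + rewrite HM; apply fixed_point_mneg; auto.
    + rewrite <- Hsq; ring.
Qed.

Lemma sin_cos_pi_div m : (2 <= m)%nat ->
  0 < sin (PI / INR m) /\ sin (PI / INR m) ^ 2 + cos (PI / INR m) ^ 2 = 1.
Proof.
  intro Hm; split.
  - assert (H2 : 2 <= INR m) by (replace 2 with (INR 2) by (simpl; ring); apply le_INR; auto).
    pose proof PI_RGT_0; apply sin_gt_0; [apply Rdiv_lt_0_compat; lra|].
    apply Rmult_lt_reg_r with (INR m); [lra|].
    unfold Rdiv; rewrite Rmult_assoc, Rinv_l by lra; nra.
  - pose proof (sin2_cos2 (PI / INR m)); unfold Rsqr in *; simpl; lra.
Qed.

Lemma cis_sq_pi_div m : Cmul (cis (- (PI / INR m))) (cis (- (PI / INR m))) = cis (- (2 * PI / INR m)).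
Proof. rewrite <- cis_add; f_equal; unfold Rdiv; ring. Qed.

Lemma fixed_point_alpha0 p : (2 <= p)%nat ->
  fixed_point (alpha0_mat p) (pt_a p) (cis (- (PI / INR p))).
Proof.
  intro Hp; destruct (sin_cos_pi_div p Hp) as [Hs H1].
  split; [|split; [|apply cis_neq0]];
  unfold num, den, alpha0_mat, pt_a, cis, Cmul, Cadd, RtoC; rewrite cos_neg, sin_neg; simpl;
  f_equal; nra.
Qed.

Lemma fixed_point_beta0 q : (2 <= q)%nat ->
  fixed_point (beta0_mat q) (pt_b q) (cis (- (PI / INR q))).
Proof.
  intro Hq; destruct (sin_cos_pi_div q Hq) as [Hs H1].
  split; [|split; [|apply cis_neq0]];
  unfold num, den, beta0_mat, pt_b, cis, Cmul, Cadd, RtoC; rewrite cos_neg, sin_neg; simpl;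
  f_equal; nra.
Qed.

Theorem mainTheorem10 (p q : nat) (p1 q1 : Z)
  (Hp : (2 <= p)%nat) (Hpq : (p < q)%nat) (Hcop : Nat.gcd p q = 1%nat)
  (Hbez : (Z.of_nat p * p1 + Z.of_nat q * q1 = 1)%Z)
  (alpha beta : tilde) (Ha : is_alpha p alpha) (Hb : is_beta q beta)
  (chi : tilde -> Cplx) (Hchi : is_character p q chi)
  (k : Q) (f : Cplx -> Cplx) (Hf : chi_automorphic p q chi k f)
  (Hnz : exists z, UHP z /\ f z <> C0)
  (na nb : nat) (Hna : vanishing_order f (pt_a p) na)
  (Hnb : vanishing_order f (pt_b q) nb) :
  chi alpha = e2pii ((Q2R k + INR na) / INR p) /\
  chi beta = e2pii ((Q2R k + INR nb) / INR q) /\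
  chi (tmul (tzpow alpha q1) (tzpow beta p1)) =
    Cmul (e2pii (Q2R k / (INR p * INR q)))
         (e2pii (IZR (Z.of_nat q * q1 * Z.of_nat na + Z.of_nat p * p1 * Z.of_nat nb)%Z
                 / (INR p * INR q))).
Proof.
  assert (Hq : (2 <= q)%nat) by lia.
  destruct Ha as [HLa [HMa HTa]], Hb as [HLb [HMb HTb]].
  destruct (Gamma_stable_pm p q _ _ HMa (G_a p q) (G_ai p q)) as [Ga Gai].
  destruct (Gamma_stable_pm p q _ _ HMb (G_b p q) (G_bi p q)) as [Gb Gbi].
  assert (CA : chi alpha = cis (2 * PI * ((Q2R k + INR na) / INR p))).
  { apply (chi_elliptic p q chi k f alpha p _ _ _ na ltac:(lia) HLa HMa HTa
      (fixed_point_alpha0 p Hp) (cis_sq_pi_div p) (proj1 (sin_cos_pi_div p Hp)) Hna Hf).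
    split; [|apply Gamma_stable_in]; auto. }
  assert (CB : chi beta = cis (2 * PI * ((Q2R k + INR nb) / INR q))).
  { apply (chi_elliptic p q chi k f beta q _ _ _ nb ltac:(lia) HLb HMb HTb
      (fixed_point_beta0 q Hq) (cis_sq_pi_div q) (proj1 (sin_cos_pi_div q Hq)) Hnb Hf).
    split; [|apply Gamma_stable_in]; auto. }
  rewrite !e2pii_cis; split; [exact CA | split; [exact CB|]].
  destruct (chi_tzpow p q chi Hchi alpha _ q1 HLa Ga Gai CA) as [IA EA].
  destruct (chi_tzpow p q chi Hchi beta _ p1 HLb Gb Gbi CB) as [IB EB].
  destruct Hchi as [_ [Hm _]]; rewrite Hm, EA, EB, <- !cis_add by auto; f_equal.
  assert (INR p <> 0) by (apply not_0_INR; lia); assert (INR q <> 0) by (apply not_0_INR; lia).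
  (* split [k/(pq)] as [k (p p1 + q q1)/(pq)] *)
  apply (f_equal IZR) in Hbez; rewrite plus_IZR, !mult_IZR, <- !INR_IZR_INZ in Hbez.
  rewrite plus_IZR, !mult_IZR, <- !INR_IZR_INZ.
  replace (Q2R k) with (Q2R k * (INR p * IZR p1 + INR q * IZR q1)) at 3 by (rewrite Hbez; ring).
  field; auto.
Qed.
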